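(* In the mechanism $\mathbb{M}_{\text{add}}$, the expected sum of payments made by the buyers equals $\frac12\sum_{\ell\in L}\Pr_{\mathbf v}[\ell\notin\Lambda_{n+1}(\mathbf v)]\,p_\ell$.
   Context: Two-sided market: buyers $[n]$, sellers $[m]$, items $[k]$; seller $j$ owns $I_j$ ($I_j$ disjoint, covering $[k]$). Buyer valuations $v_i$ are monotone normalized XOS functions on $2^{[k]}$ drawn independently from public distributions $G_i$; seller $j$'s valuation $w_j$ is additive over subsets of $I_j$, drawn independently from $F_j$. For XOS $v$ and $T\subseteq[k]$, $a(v,T,\cdot)$ is a fixed additive function with $a(v,T,T)=v(T)$, $a(v,T,S)\le v(S)$. $\mathbb{A}$ maps each buyer profile $\mathbf v$ to an allocation $X^{\mathbb A}(\mathbf v)$ of disjoint bundles to buyers. $\mathrm{SW}^B_\ell(\mathbf v)=a(v_i,X^{\mathbb A}_i(\mathbf v),\{\ell\})$ if $\ell\in X^{\mathbb A}_i(\mathbf v)$, else $0$; $\mathrm{SW}^S_\ell(\mathbf w)=w_j(\{\ell\})$ for $\ell\in I_j$. $L_j=\{\ell\in I_j:\mathbb{E}[\mathrm{SW}^B_\ell]\ge4\mathbb{E}[\mathrm{SW}^S_\ell]\}$, $L=\bigcup_jL_j$, $p_\ell=\frac12\mathbb{E}[\mathrm{SW}^B_\ell(\mathbf v)]$ for $\ell\in L$. Mechanism $\mathbb{M}_{\text{add}}$: $\Lambda_1=L$; buyers $i=1,\dots,n$ in turn request a bundle $B_i\subseteq\Lambda_i$ maximizing their expected utility at prices $p_\ell$,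 and $\Lambda_{i+1}=\Lambda_i\setminus B_i$; $\Lambda_{n+1}(\mathbf v)$ is the set of items of $L$ requested by no buyer when buyers' valuations are $\mathbf v$. Let $B=\bigcup_iB_i$. For each seller $j$: $S_j=B\cap L_j$, $p(S_j)=\sum_{\ell\in S_j}p_\ell$, $q_j=1/(2\Pr[w_j(S_j)\le p(S_j)])$; with probability $q_j$ offer $j$ payment $p(S_j)$ for $S_j$; she accepts iff $w_j(S_j)\le p(S_j)$; on acceptance each item of $S_j\cap B_i$ goes to buyer $i$, who pays $p_\ell$ for it. Buyers pay nothing for items not transferred. *)

From HB Require Import structures.
From mathcomp Require Import all_boot all_order all_algebra.
From mathcomp Require Import all_classical all_reals all_analysis.

Set Implicit Arguments.
Unset Strict Implicit.
Unset Printing Implicit Defensive.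

Import Order.TTheory GRing.Theory Num.Theory.
Local Open Scope ring_scope.

Section Valuations.
Context {R : realType} {k : nat}.

Definition monotone_val (v : {set 'I_k} -> R) : Prop :=
  forall S T : {set 'I_k}, S \subset T -> v S <= v T.

Definition normalized_val (v : {set 'I_k} -> R) : Prop := v finset.set0 = 0.

Definition XOS_val (v : {set 'I_k} -> R) : Prop :=
  exists (N : nat) (c : 'I_N -> 'I_k -> R),
    (forall t l, 0 <= c t l) /\
    forall S : {set 'I_k}, v S = \big[Num.max/0]_(t < N) \sum_(l in S) c t l.

Definition buyer_valuation (v : {set 'I_k} -> R) : Prop :=
  [/\ monotone_val v, normalized_val v & XOS_val v].

(* a v T l is the weight of item l in the fixed additive function
   a(v,T,.) ; thus a(v,T,S) = \sum_(l in S) a v T l. *)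
Definition supporting_additive
    (a : ({set 'I_k} -> R) -> {set 'I_k} -> 'I_k -> R) : Prop :=
  forall v, buyer_valuation v -> forall T : {set 'I_k},
    [/\ (forall l, 0 <= a v T l),
        \sum_(l in T) a v T l = v T &
        forall S : {set 'I_k}, \sum_(l in S) a v T l <= v S].

End Valuations.

Section Mechanism.
Context {R : realType} {n m k : nat}.
Context {dB : measure_display} {OmegaB : measurableType dB}
        (PB : probability OmegaB R)
        (V : OmegaB -> 'I_n -> {set 'I_k} -> R).
Context {dS : measure_display} {OmegaS : measurableType dS}
        (PS : probability OmegaS R)
        (* random seller values: W w l = w_j({l}) for the owner j of l *)
        (W : OmegaS -> 'I_k -> R).
Context (owner : 'I_k -> 'I_m)   (* l \in I_j  <->  owner l = j *)
        (XA : ('I_n -> {set 'I_k} -> R) -> 'I_n -> {set 'I_k})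
        (a : ({set 'I_k} -> R) -> {set 'I_k} -> 'I_k -> R)
        (* request rule: dem i v_i Lambda_i = B_i *)
        (dem : 'I_n -> ({set 'I_k} -> R) -> {set 'I_k} -> {set 'I_k}).

Definition seller_items (j : 'I_m) : {set 'I_k} := [set l | owner l == j].

Definition SWB (prof : 'I_n -> {set 'I_k} -> R) (l : 'I_k) : R :=
  \sum_(i < n) if l \in XA prof i then a (prof i) (XA prof i) l else 0.

Definition SWS (w : 'I_k -> R) (l : 'I_k) : R := w l.

Definition ESWB (l : 'I_k) : \bar R := (\int[PB]_x (SWB (V x) l)%:E)%E.
Definition ESWS (l : 'I_k) : \bar R := (\int[PS]_x (SWS (W x) l)%:E)%E.

Definition Lset : {set 'I_k} := [set l : 'I_k | (4%:E * ESWS l <= ESWB l)%E].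
Definition Lset_j (j : 'I_m) : {set 'I_k} := Lset :&: seller_items j.

Definition price (l : 'I_k) : R := fine (ESWB l) / 2.

(* Lambda_{t+1} (0-indexed: lam prof 0 = Lambda_1 = L) *)
Fixpoint lam (prof : 'I_n -> {set 'I_k} -> R) (t : nat) : {set 'I_k} :=
  match t with
  | 0 => Lset
  | t'.+1 =>
      let Lam := lam prof t' in
      Lam :\: (match (insub t' : option 'I_n) with
               | Some i => dem i (prof i) Lam
               | None => finset.set0 end)
  end.

Definition request (prof : 'I_n -> {set 'I_k} -> R) (i : 'I_n) : {set 'I_k} :=
  dem i (prof i) (lam prof i).

Definition unrequested (prof : 'I_n -> {set 'I_k} -> R) : {set 'I_k} := lam prof n.

Definition requested (prof : 'I_n -> {set 'I_k} -> R) : {set 'I_k} :=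
  \bigcup_(i < n) request prof i.

Definition seller_set (prof : 'I_n -> {set 'I_k} -> R) (j : 'I_m) : {set 'I_k} :=
  requested prof :&: Lset_j j.

Definition psum (S : {set 'I_k}) : R := \sum_(l in S) price l.

Definition wval (w : 'I_k -> R) (S : {set 'I_k}) : R := \sum_(l in S) w l.

Definition accept_prob (S : {set 'I_k}) : R :=
  fine (PS [set x | wval (W x) S <= psum S]%classic).

Definition offer_prob (S : {set 'I_k}) : R := (2 * accept_prob S)^-1.

(* Payment of buyer i for valuations (prof, w), in expectation over the
   mechanism's internal coins (seller j receives an offer w.p. q_j):
   on acceptance by seller j, buyer i pays p_l for each l in S_j :&: B_i. *)
Definition buyer_payment (prof : 'I_n -> {set 'I_k} -> R) (w : 'I_k -> R)
    (i : 'I_n) : R :=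
  \sum_(j < m)
     offer_prob (seller_set prof j) *
     (if wval w (seller_set prof j) <= psum (seller_set prof j)
      then \sum_(l in seller_set prof j :&: request prof i) price l
      else 0).

Definition total_buyer_payment (prof : 'I_n -> {set 'I_k} -> R)
    (w : 'I_k -> R) : R :=
  \sum_(i < n) buyer_payment prof w i.

Definition expected_buyer_payments : \bar R :=
  (\int[PB \x PS]_x (total_buyer_payment (V x.1) (W x.2))%:E)%E.

End Mechanism.

(* Each buyer's request is removed from the pool before the next buyer moves, so
   the requests partition the requested items L \ Lambda_{n+1}; hence the buyers
   together pay sum_j q_j [w_j(S_j) <= p(S_j)] p(S_j).  The set Lambda_{n+1} = T is
   determined by the buyers' values alone, and for fixed T the seller values give
   this the mean sum_j q_j Pr[w_j(S_j) <= p(S_j)] p(S_j) = 1/2 sum_j p(S_j)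
   = 1/2 sum_{l in L \ T} p_l: on L we have E[w_j({l})] <= p_l / 2, so by Markov's
   inequality every nontrivial offer is accepted with probability at least 1/2 and
   q_j is well defined.  Averaging over T gives the claim. *)

From HB Require Import structures.
From mathcomp Require Import all_boot all_order all_algebra.
From mathcomp Require Import all_classical all_reals all_analysis.
From mathcomp Require Import measurable_realfun.
From mathcomp Require Import lra ring.
Import Order.TTheory GRing.Theory Num.Theory.
Local Open Scope ring_scope.

Lemma sum_fiber_indic {U : Type} {T : finType} {R : pzRingType}
    (f : U -> T) (F : T -> R) (x : U) :
  F (f x) = \sum_t F t * \1_[set y | f y = t]%classic x.
Proof.
rewrite (bigD1 (f x)) //= indicE mem_set // mulr1 big1 ?addr0 // => t ne_t.
by rewrite indicE memNset ?mulr0 // => /= eq_t; rewrite eq_t eqxx in ne_t.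
Qed.

Lemma indic_setX (T1 T2 : Type) (R : pzRingType) (A : set T1) (B : set T2)
    (x : T1 * T2) :
  \1_(A `*` B) x = \1_A x.1 * \1_B x.2 :> R.
Proof. by rewrite !indicE in_setX -natrM mulnb. Qed.

Lemma integral_sum_indic d (T : measurableType d) (R : realType)
    (mu : {measure set T -> \bar R}) (I : Type) (s : seq I) (c : I -> R)
    (E : I -> set T) :
  (forall i, 0 <= c i) -> (forall i, measurable (E i)) ->
  (\int[mu]_x (\sum_(i <- s) c i * \1_(E i) x)%:E =
   \sum_(i <- s) (c i)%:E * mu (E i))%E.
Proof.
move=> c_ge0 mE; under eq_integral => x _ do rewrite -sumEFin.
rewrite ge0_integral_sum // => [|i|i x _]; last 2 first.
- by apply/measurable_EFinP/measurable_funM => //; exact: measurable_indic.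
- by rewrite lee_fin mulr_ge0.
apply: eq_bigr => i _; under eq_integral => x _ do rewrite EFinM.
rewrite ge0_integralZl_EFin // ?integral_indic ?setIT //.
exact/measurable_EFinP/measurable_indic.
Qed.

Lemma prob_le_ge_half d (T : measurableType d) (R : realType)
    (P : probability T R) (X : T -> R) (p : R) :
  measurable_fun setT X -> (forall x, 0 <= X x) -> 0 < p ->
  (\int[P]_x (X x)%:E <= (p / 2)%:E)%E ->
  ((2^-1)%:E <= P [set x | (X x <= p)%R]%classic)%E.
Proof.
move=> mX X_ge0 p_gt0 meanX.
have mle : measurable [set x | X x <= p]%classic.
  by rewrite -[A in measurable A]setTI; exact: measurable_fun_le.
have mge : measurable [set x | p <= X x]%classic.
  by rewrite -[A in measurable A]setTI; exact: measurable_fun_le.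
have markov : (p%:E * P [set x | (p <= X x)%R]%classic <= (p / 2)%:E)%E.
  apply: le_trans meanX.
  have := le_integral_abse P measurableT ((measurable_EFinP _ _).2 mX) p_gt0.
  rewrite setTI /=; under eq_integral => x _ do rewrite ger0_norm //.
  congr (_ * P _ <= _)%E.
  by apply/seteqP; split => x /=; rewrite ger0_norm ?lee_fin.
have tail : (P (~` [set x | (X x <= p)%R])%classic <= (2^-1)%:E)%E.
  apply: (@le_trans _ _ (P [set x | (p <= X x)%R]%classic)).
    apply: le_measure; rewrite ?inE //; first exact: measurableC.
    by move=> x /= /negP; rewrite -ltNge => /ltW.
  rewrite -(fineK (fin_num_measure P _ mge)) lee_fin.
  rewrite -(fineK (fin_num_measure P _ mge)) -EFinM lee_fin in markov.
  rewrite -(ler_pM2l p_gt0); lra.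
have mgt := measurableC mle.
rewrite -[A in P A]setCK probability_setC // -(fineK (fin_num_measure P _ mgt)).
rewrite -(fineK (fin_num_measure P _ mgt)) lee_fin in tail.
rewrite lee_fin; lra.
Qed.

Lemma measure_fin_preimage {d} {Omega : measurableType d} {R : realType}
    (mu : {measure set Omega -> \bar R}) {T : finType} (f : Omega -> T)
    (B : pred T) :
  (forall t, measurable [set x | f x = t]%classic) ->
  mu [set x | B (f x)]%classic = (\sum_t ((B t)%:R)%:E * mu [set x | f x = t]%classic)%E.
Proof.
move=> mf.
have indicB : \1_[set x | B (f x)]%classic =
    (fun x => \sum_t (B t)%:R * \1_[set y | f y = t]%classic x) :> (Omega -> R).
  apply/funext => x; rewrite -(sum_fiber_indic f (fun t => (B t)%:R)) indicE.
  by case: (boolP (B (f x))) => Bfx; [rewrite mem_set | rewrite memNset //= (negbTE Bfx)].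
have mB : measurable [set x | B (f x)]%classic.
  apply/(measurable_indicP R); rewrite indicB; apply: measurable_sum => t.
  by apply: measurable_funM => //; exact: measurable_indic.
rewrite -(setIT [set x | B (f x)]%classic) -integral_indic // indicB.
exact: integral_sum_indic.
Qed.

Section Payments.
Context {R : realType} {n m k : nat}.
Context {dB : measure_display} {OmegaB : measurableType dB}
  {PB : probability OmegaB R} {V : OmegaB -> 'I_n -> {set 'I_k} -> R}.
Context {dS : measure_display} {OmegaS : measurableType dS}
  {PS : probability OmegaS R} {W : OmegaS -> 'I_k -> R}.
Context {owner : 'I_k -> 'I_m}
  {XA : ('I_n -> {set 'I_k} -> R) -> 'I_n -> {set 'I_k}}
  {a : ({set 'I_k} -> R) -> {set 'I_k} -> 'I_k -> R}
  {dem : 'I_n -> ({set 'I_k} -> R) -> {set 'I_k} -> {set 'I_k}}.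
Hypothesis dem_sub : forall i v (Lam : {set 'I_k}), dem i v Lam \subset Lam.

Local Notation L := (Lset PB V PS W XA a).
Local Notation lam := (lam PB V PS W XA a dem).
Local Notation request := (request PB V PS W XA a dem).
Local Notation requested := (requested PB V PS W XA a dem).
Local Notation unrequested := (unrequested PB V PS W XA a dem).
Local Notation price := (price PB V XA a).
Local Notation psum := (psum PB V XA a).
Local Notation accept_prob := (accept_prob PB V PS W XA a).
Local Notation offer_prob := (offer_prob PB V PS W XA a).

Implicit Types (prof : 'I_n -> {set 'I_k} -> R) (S T : {set 'I_k}).

Definition round_request prof (t : nat) : {set 'I_k} :=
  if insub t is Some i then dem i (prof i) (lam prof t) else finset.set0.

Lemma lamS prof t : lam prof t.+1 = lam prof t :\: round_request prof t.
Proof. by []. Qed.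

Lemma request_round prof (i : 'I_n) : request prof i = round_request prof i.
Proof. by rewrite /request /round_request valK. Qed.

Lemma round_request_sub prof t : round_request prof t \subset lam prof t.
Proof.
by rewrite /round_request; case: insub => [i|]; [exact: dem_sub | exact: finset.sub0set].
Qed.

Lemma lam_sub_Lset prof t : lam prof t \subset L.
Proof.
elim: t => [|t IH]; first exact: subxx.
by rewrite lamS; exact: fintype.subset_trans (subsetDl _ _) IH.
Qed.

Lemma lam_decr prof {t u} : (t <= u)%N -> lam prof u \subset lam prof t.
Proof.
move/subnK <-; elim: (u - t)%N => [|d IH]; first exact: subxx.
by rewrite addSn lamS; exact: fintype.subset_trans (subsetDl _ _) IH.
Qed.

Lemma Lset_diff_lam prof t :
  L :\: lam prof t = \bigcup_(u < t) round_request prof u.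
Proof.
elim: t => [|t IH]; first by rewrite big_ord0 finset.setDv.
rewrite big_ord_recr /= -IH finset.setDDr; congr (_ :|: _).
exact/finset.setIidPr/(fintype.subset_trans (round_request_sub _ _))/lam_sub_Lset.
Qed.

Lemma requestedE prof : requested prof = L :\: lam prof n.
Proof.
by rewrite Lset_diff_lam; apply: eq_bigr => i _; rewrite request_round.
Qed.

Lemma request_disjoint prof {i j : 'I_n} :
  i != j -> [disjoint request prof i & request prof j].
Proof.
wlog lt_ij : i j / (i < j)%N => [H ne_ij|_].
  case: (ltngtP i j) => [/H|/H|/val_inj eq_ij]; last by rewrite eq_ij eqxx in ne_ij.
  - exact.
  - by rewrite disjoint_sym; apply; rewrite eq_sym.
rewrite disjoint_sym !request_round.
have : round_request prof j \subset lam prof i.+1.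
  exact: fintype.subset_trans (round_request_sub _ _) (lam_decr _ lt_ij).
by rewrite lamS subsetD => /andP[].
Qed.

Lemma sum_over_requests prof S (g : 'I_k -> R) :
  S \subset requested prof ->
  \sum_(i < n) \sum_(l in S :&: request prof i) g l = \sum_(l in S) g l.
Proof.
move=> S_sub; rewrite -partition_disjoint_bigcup => [|i j ne_ij].
  apply: eq_bigl => l; apply/finset.bigcupP/idP => [[i _ /finset.setIP[]]//|lS].
  have /finset.bigcupP[i _ li] := fintype.subsetP S_sub l lS.
  by exists i; rewrite ?inE ?lS.
exact: disjointW (finset.subsetIr _ _) (finset.subsetIr _ _) (request_disjoint _ ne_ij).
Qed.

(* The paper's S_j on the event Lambda_{n+1} = T. *)
Definition seller_bundle T (j : 'I_m) : {set 'I_k} :=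
  (L :\: T) :&: Lset_j PB V PS W owner XA a j.

Definition payment_given T (w : 'I_k -> R) : R :=
  \sum_(j < m) offer_prob (seller_bundle T j) *
    (if wval w (seller_bundle T j) <= psum (seller_bundle T j)
     then psum (seller_bundle T j) else 0).

Lemma total_buyer_payment_unrequested prof w :
  total_buyer_payment PB V PS W owner XA a dem prof w =
  payment_given (unrequested prof) w.
Proof.
rewrite /total_buyer_payment /buyer_payment exchange_big; apply: eq_bigr => j _.
have -> : seller_set PB V PS W owner XA a dem prof j =
          seller_bundle (unrequested prof) j by rewrite /seller_set requestedE.
rewrite -mulr_sumr; case: ifP => _; last by rewrite big1.
by rewrite sum_over_requests // requestedE subsetIl.
Qed.

Lemma mem_seller_bundle T j l :
  (l \in seller_bundle T j) = [&& l \in L, l \notin T & owner l == j].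
Proof.
by rewrite !inE; case: (l \in T); case: (owner l == j); rewrite /= ?andbF ?andbT ?andbb.
Qed.

Lemma sum_psum_seller_bundle T :
  \sum_(j < m) psum (seller_bundle T j) = \sum_(l in L) (l \notin T)%:R * price l.
Proof.
rewrite -partition_disjoint_bigcup => [|j j' ne_jj']; last first.
  apply/pred0P => l /=; apply/negbTE/negP.
  rewrite !mem_seller_bundle => /andP[/and3P[_ _ /eqP eq_j] /and3P[_ _ /eqP eq_j']].
  by rewrite -eq_j -eq_j' eqxx in ne_jj'.
rewrite big_mkcond [RHS]big_mkcond; apply: eq_bigr => l _.
have -> : (l \in \bigcup_j seller_bundle T j) = (l \in L) && (l \notin T).
  apply/finset.bigcupP/idP => [[j _]|/andP[lL lT]].
    by rewrite mem_seller_bundle => /and3P[-> ->].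
  by exists (owner l); rewrite // mem_seller_bundle lL lT eqxx.
by case: (l \in L); case: (l \in T); rewrite /= ?mul1r ?mul0r.
Qed.

Hypothesis W_ge0 : forall x l, 0 <= W x l.
Hypothesis int_SWB : forall l, PB.-integrable setT (fun x => (SWB XA a (V x) l)%:E).
Hypothesis int_W : forall l, PS.-integrable setT (fun x => (W x l)%:E).

Lemma mean_seller_value_le {l : 'I_k} :
  l \in L -> (\int[PS]_x (W x l)%:E <= (price l / 2)%:E)%E.
Proof.
rewrite inE => hl.
have finB : ESWB PB V XA a l \is a fin_num := integrable_fin_num measurableT (int_SWB l).
have finS : ESWS PS W l \is a fin_num := integrable_fin_num measurableT (int_W l).
rewrite -(fineK finB) -(fineK finS) lee_fin in hl.
change (ESWS PS W l <= (price l / 2)%:E)%E.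
rewrite -(fineK finS) lee_fin /price; lra.
Qed.

Lemma price_ge0 {l : 'I_k} : l \in L -> 0 <= price l.
Proof.
move=> lL; have := mean_seller_value_le lL.
have : (0 <= \int[PS]_x (W x l)%:E)%E by apply: integral_ge0 => x _; rewrite lee_fin.
by move=> /le_trans /[apply]; rewrite lee_fin => ?; lra.
Qed.

Lemma psum_ge0 {S} : S \subset L -> 0 <= psum S.
Proof. by move=> S_sub; apply: sumr_ge0 => l /(fintype.subsetP S_sub)/price_ge0. Qed.

Lemma measurable_W l : measurable_fun setT (W ^~ l).
Proof. by have /integrableP[/measurable_EFinP] := int_W l. Qed.

Lemma measurable_wval S : measurable_fun setT (fun y => wval (W y) S).
Proof.
rewrite /wval; under eq_fun do rewrite -big_enum.
by apply: measurable_sum => l; exact: measurable_W.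
Qed.

Lemma measurable_acceptance S : measurable [set y | wval (W y) S <= psum S]%classic.
Proof.
by rewrite -[A in measurable A]setTI; exact: measurable_fun_le (measurable_wval S) _.
Qed.

Lemma mean_wval_le {S} :
  S \subset L -> (\int[PS]_y (wval (W y) S)%:E <= (psum S / 2)%:E)%E.
Proof.
move=> S_sub; rewrite /wval /psum.
under eq_integral => y _ do rewrite -big_enum -sumEFin.
rewrite ge0_integral_sum //; first last.
- by move=> l y _; rewrite lee_fin.
- by move=> l; exact/measurable_EFinP/measurable_W.
rewrite big_enum /= mulr_suml -sumEFin; apply: lee_sum => l lS.
exact/mean_seller_value_le/(fintype.subsetP S_sub).
Qed.

Lemma offer_prob_ge0 S : 0 <= offer_prob S.
Proof. by rewrite /offer_prob invr_ge0 mulr_ge0 // fine_ge0 // measure_ge0. Qed.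

(* For [psum S > 0], Markov's inequality and [mean_wval_le] give
   [accept_prob S >= 1/2], so the inverse in [offer_prob S] is a genuine one. *)
Lemma offer_accept_psum {S} :
  S \subset L -> offer_prob S * accept_prob S * psum S = psum S / 2.
Proof.
move=> S_sub; have := psum_ge0 S_sub.
rewrite le_eqVlt => /predU1P[<-|psum_gt0]; first by rewrite mulr0 mul0r.
have : 2^-1 <= accept_prob S.
  rewrite -lee_fin /accept_prob fineK; last exact/fin_num_measure/measurable_acceptance.
  apply: prob_le_ge_half psum_gt0 (mean_wval_le S_sub) => [|y].
  - exact: measurable_wval.
  - by apply: sumr_ge0 => l _.
by rewrite /offer_prob => ?; field; lra.
Qed.

Hypothesis measurable_fiber :
  forall T, measurable [set x | unrequested (V x) = T]%classic.

Local Notation fiber T := [set x | unrequested (V x) = T]%classic.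
Local Notation acceptance S := [set y | wval (W y) S <= psum S]%classic.

Lemma payment_given_indic T y :
  payment_given T (W y) = \sum_(j < m) offer_prob (seller_bundle T j) *
    psum (seller_bundle T j) * \1_(acceptance (seller_bundle T j)) y.
Proof.
apply: eq_bigr => j _; rewrite indicE -mulrA; case: ifP => accepted.
  by rewrite mem_set // mulr1.
by rewrite memNset ?mulr0 //= accepted.
Qed.

Lemma total_payment_indic x :
  total_buyer_payment PB V PS W owner XA a dem (V x.1) (W x.2) =
  \sum_(p : {set 'I_k} * 'I_m) offer_prob (seller_bundle p.1 p.2) *
    psum (seller_bundle p.1 p.2) *
    \1_(fiber p.1 `*` acceptance (seller_bundle p.1 p.2)) x.
Proof.
rewrite total_buyer_payment_unrequested.
apply: (etrans (sum_fiber_indic (fun z => unrequested (V z))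
                  (fun T => payment_given T (W x.2)) x.1)).
under eq_bigr => T _ do rewrite payment_given_indic mulr_suml.
rewrite pair_big; apply: eq_bigr => -[T j] _ /=.
by rewrite indic_setX; ring.
Qed.

Lemma seller_bundle_sub T j : seller_bundle T j \subset L.
Proof. by apply/fintype.subsetP => l; rewrite mem_seller_bundle => /andP[]. Qed.

Lemma expected_buyer_payments_fibers :
  expected_buyer_payments PB V PS W owner XA a dem =
  (\sum_T fine (PB (fiber T)) * (2^-1 * \sum_(l in L) (l \notin T)%:R * price l))%:E.
Proof.
rewrite /expected_buyer_payments.
under eq_integral => x _ do rewrite total_payment_indic.
rewrite integral_sum_indic; first last.
- move=> p; apply: measurableX; first exact: measurable_fiber.
  exact: measurable_acceptance.
- by move=> p; rewrite mulr_ge0 ?offer_prob_ge0 ?psum_ge0 ?seller_bundle_sub.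
rewrite -(pair_bigA _ (fun T j =>
  (offer_prob (seller_bundle T j) * psum (seller_bundle T j))%:E *
  (PB \x PS) (fiber T `*` acceptance (seller_bundle T j)))%E) -sumEFin.
apply: eq_bigr => T _.
rewrite -sum_psum_seller_bundle !mulr_sumr -sumEFin; apply: eq_bigr => j _.
rewrite product_measure1E //; last exact: measurable_acceptance.
rewrite [X in (_ * (X * _))%E](_ : _ = (fine (PB (fiber T)))%:E); last first.
  by rewrite fineK // fin_num_measure.
rewrite [X in (_ * (_ * X))%E](_ : _ = (accept_prob (seller_bundle T j))%:E); last first.
  by rewrite fineK // fin_num_measure //; exact: measurable_acceptance.
rewrite -!EFinM; congr EFin.
have := offer_accept_psum (seller_bundle_sub T j).
set o := offer_prob _; set q := accept_prob _; set p := psum _ => accept.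
by rewrite mulrCA mulrAC accept (mulrC p).
Qed.

Lemma prob_not_unrequested l :
  PB [set x | l \notin unrequested (V x)]%classic =
  (\sum_(T : {set 'I_k}) (l \notin T)%:R * fine (PB (fiber T)))%:E.
Proof.
rewrite (measure_fin_preimage PB (fun x => unrequested (V x)) (fun T => l \notin T)) //.
rewrite -sumEFin; apply: eq_bigr => T _.
by rewrite EFinM fineK // fin_num_measure.
Qed.

End Payments.

Theorem lemma4 (R : realType) (n m k : nat)
  (dB : measure_display) (OmegaB : measurableType dB) (PB : probability OmegaB R)
  (V : OmegaB -> 'I_n -> {set 'I_k} -> R)
  (dS : measure_display) (OmegaS : measurableType dS) (PS : probability OmegaS R)
  (W : OmegaS -> 'I_k -> R)
  (owner : 'I_k -> 'I_m)
  (XA : ('I_n -> {set 'I_k} -> R) -> 'I_n -> {set 'I_k})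
  (a : ({set 'I_k} -> R) -> {set 'I_k} -> 'I_k -> R)
  (dem : 'I_n -> ({set 'I_k} -> R) -> {set 'I_k} -> {set 'I_k}) :
  (* buyer valuations are monotone normalized XOS *)
  (forall x i, buyer_valuation (V x i)) ->
  (* a(v,T,.) : additive, a(v,T,T) = v(T), a(v,T,S) <= v(S) *)
  supporting_additive a ->
  (* the allocation A assigns disjoint bundles *)
  (forall prof (i i' : 'I_n), i != i' -> [disjoint XA prof i & XA prof i']) ->
  (* each buyer requests a bundle among the remaining items *)
  (forall i v (Lam : {set 'I_k}), dem i v Lam \subset Lam) ->
  (* seller valuations are non-negative additive *)
  (forall x l, 0 <= W x l) ->
  (* regularity: the expectations exist and the events are measurable *)
  (forall l, PB.-integrable setT (fun x => (SWB XA a (V x) l)%:E)) ->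
  (forall l, PS.-integrable setT (fun x => (W x l)%:E)) ->
  (forall (t : nat) (S : {set 'I_k}),
      measurable [set x | lam PB V PS W XA a dem (V x) t = S]%classic) ->
  expected_buyer_payments PB V PS W owner XA a dem =
  ((2^-1)%:E *
   \sum_(l in Lset PB V PS W XA a)
      PB [set x | l \notin unrequested PB V PS W XA a dem (V x)]%classic
      * (price PB V XA a l)%:E)%E.
Proof.
move=> _ _ _ dem_sub W_ge0 int_SWB int_W measurable_lam.
have measurable_fiber := measurable_lam n.
rewrite (expected_buyer_payments_fibers dem_sub W_ge0 int_SWB int_W measurable_fiber).
under [in RHS]eq_bigr => l _ do rewrite (prob_not_unrequested measurable_fiber) -EFinM.
rewrite sumEFin -EFinM; congr EFin.
rewrite mulr_sumr; under [RHS]eq_bigr => l _ do rewrite mulr_suml mulr_sumr.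
rewrite [RHS]exchange_big; apply: eq_bigr => T _.
by rewrite !mulr_sumr; apply: eq_bigr => l _; ring.
Qed.
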